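(* Let $s$ be a positive even integer and $\mathfrak{S}\subseteq(\mathbb{Z}/s\mathbb{Z})^2$. Let $$\mathcal{N}(\mathfrak{S})=\left\{\tfrac32(\alpha-\beta)+\beta \bmod s/2 \ :\ (\alpha,\beta)\in\mathfrak{S},\ \alpha\equiv\beta\pmod 2\right\},$$ and assume $\mathcal{N}(\mathfrak{S})$ is a complete set of residues modulo $s/2$. Then for every $N\in\mathbb{N}$ there exists a residue $r_{N,s}$ modulo $3s$ such that for every $b\in\mathbb{Z}$ with $b\equiv r_{N,s}\pmod{3s}$ and $a=\frac23(N-b)+b$ we have $N\equiv b\pmod 3$, $a\equiv b\pmod 2$, and $(a,b)\bmod s\in\mathfrak{S}$.
   Context: Since $s$ is even, the parity of a residue modulo $s$ is well defined, and for $\alpha\equiv\beta\pmod 2$ the quantity $\frac32(\alpha-\beta)+\beta$ is a well-defined residue modulo $s/2$. *)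

From mathcomp Require Import all_boot all_order all_algebra.
Set Implicit Arguments. Unset Strict Implicit. Unset Printing Implicit Defensive.
Import Order.TTheory GRing.Theory Num.Theory.
Local Open Scope ring_scope.

(* Residues modulo s are represented by their canonical representatives
   0 <= x < s, i.e. by ordinals 'I_s; a subset of (Z/sZ)^2 is a
   {set 'I_s * 'I_s}. *)

Definition ord_int (s : nat) (x : 'I_s) : int := (nat_of_ord x)%:Z.

(* The residue class mod s/2 of 3/2(alpha - beta) + beta, computed on the
   canonical representatives (the division by 2 is exact when
   alpha = beta mod 2). *)
Definition nval (s : nat) (p : 'I_s * 'I_s) : int :=
  divz (3 * (ord_int p.1 - ord_int p.2)) 2 + ord_int p.2.

Definition N_complete (s : nat) (S : {set 'I_s * 'I_s}) : Prop :=
  forall k : int, exists2 p, p \in S &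
    (ord_int p.1 = ord_int p.2 %[mod 2])%Z /\
    (nval p = k %[mod (s./2)%:Z])%Z.

Definition pair_mod_in (s : nat) (S : {set 'I_s * 'I_s}) (a b : int) : Prop :=
  exists2 p, p \in S &
    ord_int p.1 = modz a s%:Z /\ ord_int p.2 = modz b s%:Z.

From mathcomp Require Import all_boot all_order all_algebra.
From mathcomp Require Import ring.
Import Order.TTheory GRing.Theory Num.Theory.
Local Open Scope ring_scope.

(* Pick (alpha, beta) in S with alpha = beta mod 2 and
   3/2 (alpha - beta) + beta = N mod s/2, and take r = 3 alpha - 2 N.
   If b = r + 3 s q then a = 2/3 (N - b) + b = alpha + s q, while
   b - beta = 2 (3/2 (alpha - beta) + beta - N) + 3 s q vanishes mod s
   precisely because of the congruence defining N(S). The parity of a - b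
   is then that of alpha - beta, as s is even. *)

Lemma eqz_modP (d x y : int) :
  (x = y %[mod d])%Z <-> exists q : int, x = y + q * d.
Proof.
rewrite (rwP eqP) eqz_mod_dvd.
split=> [/dvdzP[q xE] | [q ->]]; last apply/dvdzP; exists q.
  by rewrite -xE addrC subrK.
by rewrite addrC addKr.
Qed.

Lemma eqz_mod_mulr {d m x y : int} :
  (x = y %[mod d * m])%Z -> (x = y %[mod d])%Z.
Proof.
move/eqz_modP=> [q ->]; apply/eqz_modP.
by exists (q * m); rewrite mulrA mulrAC.
Qed.

Lemma ord_int_modz (s : nat) (x : 'I_s) (m : int) :
  (m = ord_int x %[mod s%:Z])%Z -> ord_int x = (m %% s%:Z)%Z.
Proof. by move=> ->; rewrite modz_small // /ord_int lez_nat ltz_nat ltn_ord. Qed.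

Section Witness.

Context {h alpha beta N b : int}.
Hypothesis alpha_beta_parity : (alpha = beta %[mod 2])%Z.
Hypothesis nval_alpha_beta : (divz (3 * (alpha - beta)) 2 + beta = N %[mod h])%Z.
Hypothesis b_witness : (b = 3 * alpha - 2 * N %[mod 3 * (2 * h)])%Z.

Lemma witness_N_mod3 : (N = b %[mod 3])%Z.
Proof.
have /eqz_modP[q ->] := b_witness; apply/eqz_modP.
by exists (N - alpha - 2 * h * q); ring.
Qed.

Lemma witness_a_mod : (divz (2 * (N - b)) 3 + b = alpha %[mod 2 * h])%Z.
Proof.
have /eqz_modP[q ->] := b_witness.
have -> : 2 * (N - (3 * alpha - 2 * N + q * (3 * (2 * h))))
          = 3 * (2 * (N - alpha - q * (2 * h))) by ring.
rewrite mulKz //; apply/eqz_modP.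
by exists q; ring.
Qed.

Lemma witness_b_mod : (b = beta %[mod 2 * h])%Z.
Proof.
have /eqz_modP[u alphaE] := alpha_beta_parity.
move: nval_alpha_beta.
have -> : 3 * (alpha - beta) = 2 * (3 * u) by rewrite alphaE; ring.
rewrite mulKz // => /eqz_modP[v betaE].
have NE : N = 3 * u + beta - v * h by rewrite betaE addrK.
have /eqz_modP[q ->] := b_witness; apply/eqz_modP.
by exists (v + 3 * q); rewrite alphaE NE; ring.
Qed.

End Witness.

Theorem lemma3p4 (s : nat) (S : {set 'I_s * 'I_s}) :
  (0 < s)%N -> ~~ odd s -> N_complete S ->
  forall N : nat, exists r : int, forall b : int,
    (b = r %[mod (3 * s)%:Z])%Z ->
    let a : int := divz (2 * (N%:Z - b)) 3 + b in
    (N%:Z = b %[mod 3])%Z /\ (a = b %[mod 2])%Z /\ pair_mod_in S a b.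
Proof.
(* [0 < s] is implied by [N_complete S], as ['I_0] is empty. *)
move=> _ s_even NS N.
have sE : s%:Z = 2 * (s./2)%:Z.
  by rewrite -[in LHS](even_halfK s_even) -muln2 PoszM mulrC.
have [p pS [parity nvalE]] := NS N%:Z.
exists (3 * ord_int p.1 - 2 * N%:Z) => b; rewrite PoszM sE => b_wit a.
have aE : (a = ord_int p.1 %[mod 2 * (s./2)%:Z])%Z := witness_a_mod b_wit.
have bE : (b = ord_int p.2 %[mod 2 * (s./2)%:Z])%Z := witness_b_mod parity nvalE b_wit.
split; first exact: witness_N_mod3 b_wit.
split.
  by rewrite (eqz_mod_mulr aE) parity -(eqz_mod_mulr bE).
exists p => //; split; apply: ord_int_modz; rewrite sE.
  exact: aE.
exact: bE.
Qed.
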